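(* Let $p,q$ be positive integers with $2\le p/q<4$, let $G$ be a connected graph with a fixed orientation, and let $f,g$ be two $(p,q)$-colourings of $G$. Let $T$ be a spanning tree of $G$ rooted at a vertex $u$, and for each vertex $v$ and $h\in\{f,g\}$ let $\mathrm{wt}(v,\varphi_h)=\varphi_h(P_v)$, where $P_v$ is the $(u,v)$-path in $T$ traversed from $u$ to $v$. Let $X=\{v:\mathrm{wt}(v,\varphi_f)\le\mathrm{wt}(v,\varphi_g)\}$ and $\overline{X}=V(G)\setminus X$. If both $D_f[X]$ and $D_f[\overline{X}]$ contain a directed cycle, then $f$ does not reconfigure to $g$.
   Context: A $(p,q)$-colouring of $G$ is a map $f:V(G)\to\{0,\dots,p-1\}$ with $q\le|f(u)-f(v)|\le p-q$ for every edge $uv$. $f$ reconfigures to $g$ if there is a sequence of $(p,q)$-colourings from $f$ to $g$ with consecutive ones differing on at most one vertex. For an arc $e=\overrightarrow{xy}$, $\varphi_h(e)=h(y)-h(x)\bmod p$. For a path $P$ with a chosen direction of traversal, $\varphi_h(P)$ is the sum (in $\mathbb{Z}$) of $\varphi_h(e)$ over edges $e$ of $P$ oriented along the traversal and of $p-\varphi_h(e)$ over edges oriented against it. $D_f$ is the digraph on $V(G)$ with an arc $\overrightarrow{xy}$ whenever $xy\in E(G)$ and $f(y)-f(x)\equiv q\pmod p$. *)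

From mathcomp Require Import all_boot.
From Stdlib Require Import Relations.Relation_Operators.
Set Implicit Arguments. Unset Strict Implicit. Unset Printing Implicit Defensive.

Section Defs.
Variable V : finType.

Definition absdiff (m n : nat) : nat := (m - n) + (n - m).

Definition pq_colouring (p q : nat) (e : rel V) (f : V -> nat) : Prop :=
  (forall v, f v < p) /\
  (forall x y, e x y -> q <= absdiff (f x) (f y) <= p - q).

Definition recolour_step (p q : nat) (e : rel V) (f g : V -> nat) : Prop :=
  pq_colouring p q e f /\ pq_colouring p q e g /\
  exists w : V, forall v, v != w -> f v = g v.

Definition reconfigures (p q : nat) (e : rel V) (f g : V -> nat) : Prop :=
  clos_refl_trans (V -> nat) (recolour_step p q e) f g.

Definition simple_graph (e : rel V) : Prop := symmetric e /\ irreflexive e.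
Definition connected_graph (e : rel V) : Prop := forall x y, connect e x y.

Definition orientation (e o : rel V) : Prop :=
  (forall x y, o x y -> e x y) /\ (forall x y, e x y -> o x y (+) o y x).

(* phi_h(xy) = h(y) - h(x) mod p, for an arc xy (values of h lie in [0,p)) *)
Definition phi (p : nat) (h : V -> nat) (x y : V) : nat := (h y + p - h x) %% p.

Definition trav (p : nat) (o : rel V) (h : V -> nat) (a b : V) : nat :=
  if o a b then phi p h a b else p - phi p h b a.

(* phi_h of the path x :: s, traversed from x to the last vertex *)
Definition path_phi (p : nat) (o : rel V) (h : V -> nat) (x : V) (s : seq V) : nat :=
  \sum_(ab <- zip (x :: s) s) trav p o h ab.1 ab.2.

(* cycle (length >= 3, distinct vertices) in an undirected graph t *)
Definition has_cycle (t : rel V) : Prop :=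
  exists (x : V) (s : seq V),
    [/\ 2 <= size s, uniq (x :: s), path t x s & t (last x s) x].

Definition spanning_tree (e t : rel V) : Prop :=
  [/\ symmetric t, (forall x y, t x y -> e x y),
      (forall x y, connect t x y) & ~ has_cycle t].

Definition is_tpath (t : rel V) (x y : V) (s : seq V) : Prop :=
  [/\ path t x s, last x s = y & uniq (x :: s)].

Definition Dgraph (p q : nat) (e : rel V) (f : V -> nat) : rel V :=
  fun x y => e x y && ((f y + p - f x) %% p == q %% p).

(* the induced subdigraph D[A] contains a directed cycle
   (distinct vertices, length >= 2) *)
Definition has_dicycle_in (D : rel V) (A : {set V}) : Prop :=
  exists (x : V) (s : seq V),
    [/\ 1 <= size s, uniq (x :: s), all (mem A) (x :: s),
        path D x s & D (last x s) x].
End Defs.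

(* Two invariants survive every recolouring step.  First, a vertex w on a
   directed cycle of D_f is frozen: its two neighbours on the cycle carry the
   colours f(w) - q and f(w) + q, and since p < 4q the only colour at circular
   distance at least q from both is f(w).  Second, for vertices x, y that are
   never recoloured, wt(x) - wt(y) is unchanged: recolouring an inner vertex of
   a tree path leaves the sum of its two edge contributions fixed, and
   recolouring the root u shifts the first edge contribution of every path by
   the same amount, both again because p < 4q.  Take x in D_f[X] and
   y in D_f[~X] on directed cycles: wt_f(x) <= wt_g(x) and wt_f(y) > wt_g(y)
   contradict wt_f(x) - wt_f(y) = wt_g(x) - wt_g(y). *)
From mathcomp Require Import all_boot zify.
From Stdlib Require Import Relations.Relation_Operators Relations.Operators_Properties.
Set Implicit Arguments. Unset Strict Implicit.

Lemma modnDB_lt p a b : a < p -> b < p ->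
  (a + p - b) %% p = if b <= a then a - b else a + p - b.
Proof.
move=> ha hb; case: ifP => hba; last by rewrite modn_small; lia.
have -> : a + p - b = a - b + p by lia.
by rewrite modnDr modn_small; lia.
Qed.

Lemma edge_neq (T : eqType) (r : rel T) x y : irreflexive r -> r x y -> x != y.
Proof. by move=> irr; apply: contraTneq => ->; rewrite irr. Qed.

Section EdgeContribution.
Variables (V : finType) (e o : rel V) (p q : nat).

Lemma trav_edge h a b : pq_colouring p q e h -> e a b ->
  q <= trav p o h a b <= p - q /\
  (trav p o h a b + h a = h b \/ trav p o h a b + h a = h b + p).
Proof.
move=> [hlt hadj] eab; have := hadj _ _ eab; rewrite /absdiff.
have := hlt a; have := hlt b.
by rewrite /trav /phi; case: (o a b); rewrite modnDB_lt //; case: ifP; lia.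
Qed.

Lemma trav_eq h h' a b : h' a = h a -> h' b = h b ->
  trav p o h' a b = trav p o h a b.
Proof. by move=> ea eb; rewrite /trav /phi ea eb. Qed.

Lemma path_phi_nil h x : path_phi p o h x [::] = 0.
Proof. by rewrite /path_phi big_nil. Qed.

Lemma path_phi_cons h x y s :
  path_phi p o h x (y :: s) = trav p o h x y + path_phi p o h y s.
Proof. by rewrite /path_phi big_cons. Qed.

Lemma eq_path_phi h h' x s : h' =1 h -> path_phi p o h' x s = path_phi p o h x s.
Proof.
move=> eqh; elim: s x => [|y s IH] x; first by rewrite !path_phi_nil.
by rewrite !path_phi_cons IH (trav_eq (eqh x) (eqh y)).
Qed.

Hypothesis p_lt_4q : p < 4 * q.

(* In both lemmas the two sides lie in [2q, 2p - 2q], an interval of length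
   less than p, and are congruent modulo p. *)
Lemma trav_mid h h' a w b : pq_colouring p q e h -> pq_colouring p q e h' ->
  e a w -> e w b -> h' a = h a -> h' b = h b ->
  trav p o h' a w + trav p o h' w b = trav p o h a w + trav p o h w b.
Proof.
move=> ph ph' eaw ewb ha hb.
have := trav_edge ph eaw; have := trav_edge ph' eaw.
have := trav_edge ph ewb; have := trav_edge ph' ewb.
rewrite ha hb; lia.
Qed.

Lemma trav_shift h h' x a b : pq_colouring p q e h -> pq_colouring p q e h' ->
  e x a -> e x b -> h' a = h a -> h' b = h b ->
  trav p o h' x a + trav p o h x b = trav p o h x a + trav p o h' x b.
Proof.
move=> ph ph' exa exb ha hb.
have := trav_edge ph exa; have := trav_edge ph' exa.
have := trav_edge ph exb; have := trav_edge ph' exb.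
rewrite ha hb; lia.
Qed.

Section Recolouring.
Variables (h h' : V -> nat) (w : V).
Hypotheses (irr : irreflexive e)
  (ph : pq_colouring p q e h) (ph' : pq_colouring p q e h')
  (agree : forall v, v != w -> h' v = h v).

Lemma path_phi_recolour s x : path e x s -> x != w -> last x s != w ->
  path_phi p o h' x s = path_phi p o h x s.
Proof.
move: {2}(size s) (leqnn (size s)) => n; elim: n s x => [|n IH] [|y s] //= x sz;
  try by rewrite !path_phi_nil.
move=> /andP[exy py] xw lw; rewrite !path_phi_cons.
have [yw | yw] := eqVneq y w; last first.
  by rewrite (trav_eq (agree xw) (agree yw)) (IH s _ _ py yw lw).
case: s sz py lw => [|z s] sz; first by rewrite yw eqxx.
subst y; move=> /= /andP[ewz pz] lw.
have zw : z != w by rewrite eq_sym (edge_neq irr).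
rewrite !path_phi_cons !addnA (IH s z (ltnW sz) pz zw lw).
by rewrite (trav_mid ph ph' exy ewz (agree xw) (agree zw)).
Qed.

Lemma path_phi_recolour_root s y : path e w (y :: s) -> last y s != w ->
  path_phi p o h' w (y :: s) + trav p o h w y =
  path_phi p o h w (y :: s) + trav p o h' w y.
Proof.
move=> /= /andP[ewy py] lw; have yw : y != w by rewrite eq_sym (edge_neq irr).
by rewrite !path_phi_cons (path_phi_recolour py yw lw); lia.
Qed.

Lemma path_phi_recolour_diff u s1 s2 : path e u s1 -> path e u s2 ->
  h' (last u s1) = h (last u s1) -> h' (last u s2) = h (last u s2) ->
  path_phi p o h' u s1 + path_phi p o h u s2 =
  path_phi p o h u s1 + path_phi p o h' u s2.
Proof.
move=> pth1 pth2 fix1 fix2.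
have [hw | hw] := eqVneq (h' w) (h w).
  have eqh : h' =1 h by move=> v; have [->|/agree] := eqVneq v w.
  by rewrite !(eq_path_phi _ _ eqh).
have l1w : last u s1 != w by apply: contraNneq hw => <-; rewrite fix1.
have l2w : last u s2 != w by apply: contraNneq hw => <-; rewrite fix2.
have [uw | uw] := eqVneq u w; last by rewrite !path_phi_recolour.
subst u; clear fix1 fix2; case: s1 pth1 l1w => [|y1 s1]; first by rewrite eqxx.
case: s2 pth2 l2w => [|y2 s2]; first by rewrite eqxx.
move=> pth2 l2w pth1 l1w.
have := path_phi_recolour_root pth1 l1w; have := path_phi_recolour_root pth2 l2w.
move: pth1 pth2 => /= /andP[ewy1 _] /andP[ewy2 _].
have y1w : y1 != w by rewrite eq_sym (edge_neq irr).
have y2w : y2 != w by rewrite eq_sym (edge_neq irr).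
have := trav_shift ph ph' ewy1 ewy2 (agree y1w) (agree y2w); lia.
Qed.

End Recolouring.
End EdgeContribution.

Lemma colour_between_arcs p q a c b c' :
  0 < q -> 2 * q <= p -> p < 4 * q -> a < p -> c < p -> b < p -> c' < p ->
  (c + p - a) %% p = q %% p -> (b + p - c) %% p = q %% p ->
  q <= absdiff a c' <= p - q -> q <= absdiff c' b <= p - q -> c' = c.
Proof.
move=> q0 p2q p4q ap cp bp c'p; rewrite /absdiff (@modn_small q); last by lia.
by rewrite !modnDB_lt //; case: ifP; case: ifP; lia.
Qed.

Section Reconfiguration.
Variables (V : finType) (e o : rel V) (p q : nat) (f : V -> nat).
Hypotheses (q_gt0 : 0 < q) (p_ge2q : 2 * q <= p) (p_lt_4q : p < 4 * q)
  (irr : irreflexive e) (pf : pq_colouring p q e f).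

Lemma dicycle_recolour_fixed h h' w c : pq_colouring p q e h' ->
  cycle (Dgraph p q e f) c -> {in c, h =1 f} ->
  (forall v, v != w -> h' v = h v) -> {in c, h' =1 f}.
Proof.
move=> [h'lt h'adj] cyc hf agree v vc.
have [vw | vw] := eqVneq v w; last by rewrite agree // hf.
have /andP[eav arc_av] := prev_cycle cyc vc.
have /andP[evb arc_vb] := next_cycle cyc vc.
have fixed x : x \in c -> x != w -> h' x = f x by move=> xc xw; rewrite agree // hf.
have [pv nv] : prev c v != w /\ next c v != w.
  by rewrite -vw (edge_neq irr eav) eq_sym (edge_neq irr evb).
have := h'adj _ _ eav; have := h'adj _ _ evb.
rewrite (fixed (prev c v)) ?mem_prev // (fixed (next c v)) ?mem_next //.
move=> adj_vb adj_av.
case: pf => flt _.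
exact: (colour_between_arcs q_gt0 p_ge2q p_lt_4q (flt _) (flt _) (flt _) (h'lt v)
  (eqP arc_av) (eqP arc_vb) adj_av adj_vb).
Qed.

Lemma reconfigures_dicycle_fixed c k : cycle (Dgraph p q e f) c ->
  reconfigures p q e f k -> {in c, k =1 f}.
Proof.
move=> cyc fk; have {fk} := clos_rt_rtn1 _ _ _ _ fk.
elim=> [//|h h' [_ [ph' [w agree]]] _ IH].
by apply: (dicycle_recolour_fixed ph' cyc IH) => v /agree.
Qed.

Lemma reconfigures_path_phi_diff c1 c2 u s1 s2 k :
  cycle (Dgraph p q e f) c1 -> cycle (Dgraph p q e f) c2 ->
  path e u s1 -> path e u s2 -> last u s1 \in c1 -> last u s2 \in c2 ->
  reconfigures p q e f k ->
  path_phi p o k u s1 + path_phi p o f u s2 = path_phi p o f u s1 + path_phi p o k u s2.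
Proof.
move=> cyc1 cyc2 pth1 pth2 l1 l2 fk; have {fk} := clos_rt_rtn1 _ _ _ _ fk.
have fixed h : reconfigures p q e f h ->
    h (last u s1) = f (last u s1) /\ h (last u s2) = f (last u s2).
  by move=> fh; split;
    [apply: (reconfigures_dicycle_fixed cyc1) | apply: (reconfigures_dicycle_fixed cyc2)].
elim=> [//|h h' step fh IH]; have [ph [ph' [w agree]]] := step.
have [h1 h2] := fixed h (clos_rtn1_rt _ _ _ _ fh).
have fh' := Relation_Operators.rtn1_trans _ _ _ _ _ step fh.
have [h'1 h'2] := fixed h' (clos_rtn1_rt _ _ _ _ fh').
have agree' v : v != w -> h' v = h v by move/agree.
have := path_phi_recolour_diff o p_lt_4q irr ph ph' agree' pth1 pth2.
by rewrite h1 h2 h'1 h'2 => /(_ erefl erefl); lia.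
Qed.

End Reconfiguration.

Lemma dicycle_in_cycle (V : finType) (D : rel V) (A : {set V}) :
  has_dicycle_in D A -> exists x s, cycle D (x :: s) /\ x \in A.
Proof.
case=> x [s [_ _ /andP[xA _] pth cl]].
by exists x, s; rewrite /cycle rcons_path pth cl.
Qed.

Theorem lemma2p9 (V : finType) (e o : rel V) (p q : nat)
  (f g : V -> nat) (t : rel V) (u : V) (P : V -> seq V) :
  0 < q -> 2 * q <= p -> p < 4 * q ->
  simple_graph e -> connected_graph e -> orientation e o ->
  pq_colouring p q e f -> pq_colouring p q e g ->
  spanning_tree e t ->
  (forall v, is_tpath t u v (P v)) ->
  let X := [set v | path_phi p o f u (P v) <= path_phi p o g u (P v)] in
  has_dicycle_in (Dgraph p q e f) X ->
  has_dicycle_in (Dgraph p q e f) (~: X) ->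
  ~ reconfigures p q e f g.
Proof.
move=> q_gt0 p_ge2q p_lt_4q [_ irr] _ _ pf _ [_ te _ _] tree_path X
  /dicycle_in_cycle [x1 [c1 [cyc1 x1X]]] /dicycle_in_cycle [x2 [c2 [cyc2 x2X]]] fg.
have P_path v : path e u (P v) /\ last u (P v) = v.
  by have [pt lv _] := tree_path v; split=> //; apply: (sub_path te).
have [pth1 l1] := P_path x1; have [pth2 l2] := P_path x2.
have l1c : last u (P x1) \in x1 :: c1 by rewrite l1 mem_head.
have l2c : last u (P x2) \in x2 :: c2 by rewrite l2 mem_head.
have := reconfigures_path_phi_diff o q_gt0 p_ge2q p_lt_4q irr pf
  cyc1 cyc2 pth1 pth2 l1c l2c fg.
by move: x1X x2X; rewrite !inE; lia.
Qed.
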